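(* Let $\models$ be an intersective mixed consequence truth-relation on a finite set $V$ of truth values (constant expressive setting). Then $\models$ admits a G-conditional iff every minimal representation $\models_{\mathcal{D}_p^1,\mathcal{D}_c^1}\cap\dots\cap\models_{\mathcal{D}_p^K,\mathcal{D}_c^K}$ of it satisfies the following, where the list of sets of designated values is $\mathcal{D}_p^1,\mathcal{D}_c^1,\dots,\mathcal{D}_p^K,\mathcal{D}_c^K$: (DC1) for each set $\mathcal{D}_i$ in the list, either some truth value belongs to $\mathcal{D}_i$ and to no other set in the list, or $\mathcal{D}_i$ is included in another, distinct set of the list; (DC2) for every non-empty sublist $\mathcal{D}'_1,\dots,\mathcal{D}'_{n'}$ there is $x\in V$ such that for every set $\mathcal{D}_i$ of the list: $x\in\mathcal{D}_i$ iff $\exists i'$ with $\mathcal{D}'_{i'}\subseteq\mathcal{D}_i$; (N1) for $i\neq j$ there is no inclusion $\mathcal{D}_p^i\subseteq\mathcal{D}_p^j$ nor $\mathcal{D}_c^i\subseteq\mathcal{D}_c^j$; (N2) for all $i,j$: if $\mathcal{D}_p^i\subseteq\mathcal{D}_c^j$ then $\mathcal{D}_p^j\subseteq\mathcal{D}_c^i$, and if $\mathcal{D}_c^j\subseteq\mathcal{D}_p^i$ then $\mathcal{D}_c^i\subseteq\mathcal{D}_p^j$.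
   Context: $V$ contains distinct $1,0$; sets of designated values: $\mathcal{D}\subseteq V$, $1\in\mathcal{D}$, $0\notin\mathcal{D}$. $\gamma\models_{\mathcal{D}_p,\mathcal{D}_c}\delta$ iff ($\gamma\subseteq\mathcal{D}_p\Rightarrow\delta\cap\mathcal{D}_c\neq\emptyset$). An intersective mixed truth-relation is a finite intersection of such; a representation is a list of mixed relations whose intersection it is, minimal if of least possible length. Semantics: valuations mapping atoms to $V$, connectives interpreted by fixed truth functions, extended compositionally, every assignment to finitely many distinct atoms realized; constant expressive: every value is the constant value of some formula. $\Gamma\vdash\Delta$ iff $v(\Gamma)\models v(\Delta)$ for all $v$. A G-conditional is a binary connective $\to$ (interpreted by some truth function) with, for all $\Gamma,\Delta,A,B$: $\Gamma\vdash\{A\to B\}\cup\Delta$ iff $\Gamma\cup\{A\}\vdash\{B\}\cup\Delta$; and $\Gamma\cup\{A\to B\}\vdash\Delta$ iff ($\Gamma\vdash\{A\}\cup\Delta$ and $\Gamma\cup\{B\}\vdash\Delta$). *)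

From mathcomp Require Import all_boot.
From mathcomp Require Import boolp.

Set Implicit Arguments.
Unset Strict Implicit.
Unset Printing Implicit Defensive.

Section Defs.
Variable V : finType.

Definition designated (one zero : V) (D : {set V}) : bool :=
  (one \in D) && (zero \notin D).

Definition mixed (Dp Dc : {set V}) (gamma delta : {set V}) : bool :=
  (gamma \subset Dp) ==> (delta :&: Dc != set0).

Definition representation (one zero : V) (R : {set V} -> {set V} -> bool)
    (L : seq ({set V} * {set V})) : Prop :=
  [/\ 0 < size L,
      all (fun p => designated one zero p.1 && designated one zero p.2) L &
      forall gamma delta, R gamma delta = all (fun p => mixed p.1 p.2 gamma delta) L].

Definition intersective (one zero : V) (R : {set V} -> {set V} -> bool) : Prop :=
  exists L, representation one zero R L.

Definition minimal_representation (one zero : V) (R : {set V} -> {set V} -> bool)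
    (L : seq ({set V} * {set V})) : Prop :=
  representation one zero R L /\
  forall L', representation one zero R L' -> size L <= size L'.

Definition des_list (L : seq ({set V} * {set V})) : seq {set V} :=
  flatten [seq [:: p.1; p.2] | p <- L].

Definition DC1 (L : seq ({set V} * {set V})) : Prop :=
  forall D, D \in des_list L ->
    (exists x, x \in D /\ forall D', D' \in des_list L -> D' != D -> x \notin D')
    \/ (exists D', [/\ D' \in des_list L, D' != D & D \subset D']).

Definition DC2 (L : seq ({set V} * {set V})) : Prop :=
  forall S : seq {set V}, S != [::] -> subseq S (des_list L) ->
    exists x : V, forall D, D \in des_list L ->
      (x \in D <-> exists2 D', D' \in S & D' \subset D).

Definition N1 (L : seq ({set V} * {set V})) : Prop :=
  forall i j, i < size L -> j < size L -> i != j ->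
    ~~ ((nth (set0, set0) L i).1 \subset (nth (set0, set0) L j).1) /\
    ~~ ((nth (set0, set0) L i).2 \subset (nth (set0, set0) L j).2).

Definition N2 (L : seq ({set V} * {set V})) : Prop :=
  forall i j, i < size L -> j < size L ->
    let Dpi := (nth (set0, set0) L i).1 in let Dci := (nth (set0, set0) L i).2 in
    let Dpj := (nth (set0, set0) L j).1 in let Dcj := (nth (set0, set0) L j).2 in
    (Dpi \subset Dcj -> Dpj \subset Dci) /\ (Dcj \subset Dpi -> Dci \subset Dpj).

Definition conditions (L : seq ({set V} * {set V})) : Prop :=
  [/\ DC1 L, DC2 L, N1 L & N2 L].

End Defs.

(* Formulas over a signature Con of connectives (interpreted by truth functions on
   lists of argument values), with an additional binary connective Imp
   (the candidate conditional). *)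
Inductive form (Con : Type) : Type :=
| Atom of nat
| App of Con & seq (form Con)
| Imp of form Con & form Con.

Arguments Atom {Con}.

Fixpoint eval (V : Type) (Con : Type) (interp : Con -> seq V -> V) (f : V -> V -> V)
    (v : nat -> V) (A : form Con) : V :=
  match A with
  | Atom n => v n
  | App c args => interp c (map (eval interp f v) args)
  | Imp A1 A2 => f (eval interp f v A1) (eval interp f v A2)
  end.

Fixpoint imp_free (Con : Type) (A : form Con) : bool :=
  match A with
  | Atom _ => true
  | App _ args => all (@imp_free Con) args
  | Imp _ _ => false
  end.

(* constant expressive: every value is the constant value of some formula
   of the base language (not using Imp, so independent of its interpretation) *)
Definition const_expressive (V : Type) (Con : Type) (interp : Con -> seq V -> V) : Prop :=
  forall x : V, exists A : form Con, imp_free A /\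
    forall (f : V -> V -> V) (v : nat -> V), eval interp f v A = x.

Definition img (V : finType) (Con : Type) (interp : Con -> seq V -> V) (f : V -> V -> V)
    (v : nat -> V) (Gamma : form Con -> Prop) : {set V} :=
  [set x | `[< exists A, Gamma A /\ eval interp f v A = x >]].

Definition entails (V : finType) (Con : Type) (interp : Con -> seq V -> V) (f : V -> V -> V)
    (R : {set V} -> {set V} -> bool) (Gamma Delta : form Con -> Prop) : Prop :=
  forall v : nat -> V, R (img interp f v Gamma) (img interp f v Delta).

Definition addf (Con : Type) (Gamma : form Con -> Prop) (A : form Con) : form Con -> Prop :=
  fun B => Gamma B \/ B = A.

Definition G_conditional (V : finType) (Con : Type) (interp : Con -> seq V -> V)
    (f : V -> V -> V) (R : {set V} -> {set V} -> bool) : Prop :=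
  forall (Gamma Delta : form Con -> Prop) (A B : form Con),
    (entails interp f R Gamma (addf Delta (Imp A B))
       <-> entails interp f R (addf Gamma A) (addf Delta B)) /\
    (entails interp f R (addf Gamma (Imp A B)) Delta
       <-> entails interp f R Gamma (addf Delta A) /\ entails interp f R (addf Gamma B) Delta).

Definition admits_G_conditional (V : finType) (Con : Type) (interp : Con -> seq V -> V)
    (R : {set V} -> {set V} -> bool) : Prop :=
  exists f : V -> V -> V, G_conditional interp f R.

From mathcomp Require Import all_boot.
From mathcomp Require Import boolp.

Set Implicit Arguments.
Unset Strict Implicit.
Unset Printing Implicit Defensive.

(* At the level of truth values, Imp interpreted by f is a G-conditional iff
     R G ({f a b} ∪ D) = R ({a} ∪ G) ({b} ∪ D)  and
     R ({f a b} ∪ G) D = R G ({a} ∪ D) && R ({b} ∪ G) D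
   for all sets G, D and values a, b, since constant formulas realise every set of values.
   The pairs (P_k, C_k) of a minimal representation form an antichain, so evaluating these
   laws at G = P_k, D = ∁C_k isolates the k-th pair: the laws hold iff for every k
     f a b ∈ C_k ⇔ (a ∈ P_k → b ∈ C_k)  and  f a b ∈ P_k ⇔ (a ∈ C_k → b ∈ P_k).
   Such an f yields a negation ¬a := f a 0, which lies in P_k iff a ∉ C_k and in C_k iff
   a ∉ P_k, and a disjunction f (¬a) b acting as union on every designated set; iterated
   conjunctions and disjunctions are the witnesses of DC1 and DC2, and negation gives
   N1 and N2. Conversely, under N1 and N2 the designated sets that f a b has
   to belong to are upward closed in the list, and DC2 provides a value lying in exactly
   those sets. *)

Section DesignatedSets.
Variable V : finType.
Implicit Types (x a b c : V) (G D P C X Y : {set V}) (p q : {set V} * {set V})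
  (L : seq ({set V} * {set V})) (R : {set V} -> {set V} -> bool).

Lemma set1I_neq0 x C : ([set x] :&: C != set0) = (x \in C).
Proof. by rewrite setI_eq0 disjoints1 negbK. Qed.

Lemma setU1I_neq0 x D C : ((x |: D) :&: C != set0) = (x \in C) || (D :&: C != set0).
Proof. by rewrite setIUl setU_eq0 negb_and set1I_neq0. Qed.

Lemma mixed_setU1r P C G D a b c : (c \in C) = ((a \in P) ==> (b \in C)) ->
  mixed P C G (c |: D) = mixed P C (a |: G) (b |: D).
Proof.
move=> cC; rewrite /mixed subUset sub1set !setU1I_neq0 cC.
by case: (a \in P); case: (b \in C); case: (G \subset P).
Qed.

Lemma mixed_setU1l P C G D a b c : (c \in P) = ((a \in C) ==> (b \in P)) ->
  mixed P C (c |: G) D = mixed P C G (a |: D) && mixed P C (b |: G) D.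
Proof.
move=> cP; rewrite /mixed !subUset !sub1set setU1I_neq0 cP.
by case: (a \in C); case: (b \in P); case: (G \subset P); case: (_ != set0).
Qed.

Lemma mixed_weaken P C P' C' G D : P \subset P' -> C' \subset C ->
  mixed P' C' G D -> mixed P C G D.
Proof.
move=> PP' C'C /implyP mixed'; apply/implyP => /subset_trans/(_ PP')/mixed'.
exact/subset_neq0/setIS.
Qed.

Lemma des_list_pair L p : p \in L -> p.1 \in des_list L /\ p.2 \in des_list L.
Proof.
by move=> pL; split; apply/flatten_mapP; exists p; rewrite // !inE eqxx ?orbT.
Qed.

Lemma des_list_designated one zero L :
    all (fun p => designated one zero p.1 && designated one zero p.2) L ->
  forall D, D \in des_list L -> designated one zero D.
Proof.
move=> /allP Ldes D /flatten_mapP [p /Ldes /andP [des1 des2]].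
by rewrite !inE => /orP [] /eqP ->.
Qed.

Definition antichain L := forall p q, p \in L -> q \in L ->
  p.1 \subset q.1 -> q.2 \subset p.2 -> p = q.

Section MinimalRepresentations.
Variables (one zero : V) (R : {set V} -> {set V} -> bool).

Lemma minimal_representation_exists :
  intersective one zero R -> exists L, minimal_representation one zero R L.
Proof.
case=> L0 repL0.
pose has_rep n := `[< exists L, representation one zero R L /\ size L = n >].
have has_rep0 : has_rep (size L0) by apply/asboolP; exists L0.
have [_ /asboolP [L [repL <-]] minL] := ex_minnP (ex_intro has_rep _ has_rep0).
by exists L; split=> // L' repL'; apply: minL; apply/asboolP; exists L'.
Qed.

Lemma representation_rem L p q : representation one zero R L -> p \in L ->
    q \in rem p L -> (forall G D, mixed q.1 q.2 G D -> mixed p.1 p.2 G D) ->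
  representation one zero R (rem p L).
Proof.
case=> _ Ldes RE pL qL qp; have Lperm := perm_to_rem pL.
split; first by case: (rem p L) qL.
  by move: Ldes; rewrite (perm_all _ Lperm) => /andP [].
move=> G D; rewrite RE (perm_all _ Lperm) /=; apply/andb_idl => /allP.
by move=> /(_ q qL); apply: qp.
Qed.

Lemma minimal_representation_antichain L :
  minimal_representation one zero R L -> antichain L.
Proof.
case=> repL minL p q pL qL p1q1 q2p2; apply/eqP/negPn/negP => neq_pq.
have qp G D := @mixed_weaken _ _ _ _ G D p1q1 q2p2.
have repL' : representation one zero R (rem p L).
  by apply: (representation_rem repL pL _ qp); rewrite rem_mem // eq_sym.
have := minL _ repL'; rewrite size_rem // leqNgt ltn_predL.
by case: repL => ->.
Qed.

Lemma minimal_representation_uniq L :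
  minimal_representation one zero R L -> uniq L.
Proof.
case=> -[L_gt0 Ldes RE] minL; apply: contraT; rewrite -ltn_size_undup ltnNge.
move/negbTE <-; apply: minL; split.
- by rewrite -has_predT has_undup has_predT.
- by rewrite all_undup.
- by move=> G D; rewrite RE all_undup.
Qed.

End MinimalRepresentations.

Definition N1_pairs L := forall p q, p \in L -> q \in L ->
  (p.1 \subset q.1) || (p.2 \subset q.2) -> p = q.

Definition N2_pairs L := forall p q, p \in L -> q \in L ->
  (p.1 \subset q.2 -> q.1 \subset p.2) /\ (q.2 \subset p.1 -> p.2 \subset q.1).

Lemma N1_pairsP L : uniq L -> N1 L <-> N1_pairs L.
Proof.
move=> Lu; split=> [N1L p q | N1L i j ilt jlt].
  move=> /(nthP (set0, set0)) [i ilt <-] /(nthP (set0, set0)) [j jlt <-].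
  have [-> //|ij] := eqVneq i j.
  by have [/negbTE-> /negbTE->] := N1L i j ilt jlt ij.
rewrite -(nth_uniq (set0, set0) ilt jlt Lu) => ij.
by split; apply: contra ij => sub; apply/eqP/N1L; rewrite ?mem_nth ?sub ?orbT.
Qed.

Lemma N2_pairsP L : N2 L <-> N2_pairs L.
Proof.
split=> [N2L p q | N2L i j ilt jlt].
  by move=> /(nthP (set0, set0)) [i ilt <-] /(nthP (set0, set0)) [j jlt <-]; apply: N2L.
by apply: N2L; rewrite mem_nth.
Qed.

Definition cond_value L a b c := forall p, p \in L ->
  (c \in p.2) = ((a \in p.1) ==> (b \in p.2)) /\ (c \in p.1) = ((a \in p.2) ==> (b \in p.1)).

Definition cond_laws R (f : V -> V -> V) :=
  (forall G D a b, R G (f a b |: D) = R (a |: G) (b |: D)) /\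
  (forall G D a b, R (f a b |: G) D = R G (a |: D) && R (b |: G) D).

Lemma cond_laws_of_values one zero R L f : representation one zero R L ->
  (forall a b, cond_value L a b (f a b)) -> cond_laws R f.
Proof.
case=> _ _ RE fL; split=> G D a b; rewrite !RE.
  by apply: eq_in_all => p /(fL a b) [fC _]; apply: mixed_setU1r.
by rewrite -all_predI; apply: eq_in_all => p /(fL a b) [_ fP]; apply: mixed_setU1l.
Qed.

Lemma mixed_all_at_pair L p X Y : antichain L -> p \in L ->
  all (fun q => mixed q.1 q.2 (X :|: p.1) (Y :|: ~: p.2)) L =
  (X \subset p.1) ==> (Y :&: p.2 != set0).
Proof.
move=> anti pL; have mixed_p : mixed p.1 p.2 (X :|: p.1) (Y :|: ~: p.2) =
    (X \subset p.1) ==> (Y :&: p.2 != set0).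
  by rewrite /mixed subUset subxx andbT setIUl [~: _ :&: _]setIC setICr setU0.
apply/allP/idP => [/(_ p pL)|mixedp q qL]; first by rewrite mixed_p.
have [<-|neq_pq] := eqVneq p q; first by rewrite mixed_p.
apply/implyP => /subUsetP [_ p1q1].
have /subsetPn [y yq2 yp2] : ~~ (q.2 \subset p.2).
  by apply: contra neq_pq => q2p2; rewrite (anti p q).
by apply/set0Pn; exists y; rewrite !inE yq2 yp2 orbT.
Qed.

Lemma cond_values_of_laws one zero R L f : representation one zero R L ->
  antichain L -> cond_laws R f -> forall a b, cond_value L a b (f a b).
Proof.
case=> _ _ RE anti [lawR lawL] a b p pL.
have RXY X Y : R (X :|: p.1) (Y :|: ~: p.2) = (X \subset p.1) ==> (Y :&: p.2 != set0).
  by rewrite RE mixed_all_at_pair.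
have R0Y Y : R p.1 (Y :|: ~: p.2) = (Y :&: p.2 != set0).
  by have := RXY set0 Y; rewrite set0U sub0set.
have RX0 X : R (X :|: p.1) (~: p.2) = ~~ (X \subset p.1).
  by have := RXY X set0; rewrite set0U set0I eqxx implybF.
split.
  by have := lawR p.1 (~: p.2) a b; rewrite R0Y RXY sub1set !set1I_neq0.
have := lawL p.1 (~: p.2) a b; rewrite !RX0 R0Y !sub1set set1I_neq0.
by case: (_ \in p.1); case: (a \in _); case: (b \in _).
Qed.

Lemma subset_dual (h : V -> V) (D1 D2 E1 E2 : {set V}) :
    (forall a, (h a \in D1) = (a \notin E1)) -> (forall a, (h a \in D2) = (a \notin E2)) ->
  D1 \subset D2 -> E2 \subset E1.
Proof.
move=> hD1 hD2 /subsetP D12; apply/subsetP => a aE2; apply: contraT; rewrite -hD1.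
by move/D12; rewrite hD2 aE2.
Qed.

Section ConditionsOfValues.
Variables (one zero : V) (L : seq ({set V} * {set V})) (g : V -> V -> V).
Hypothesis Ldes : all (fun p => designated one zero p.1 && designated one zero p.2) L.
Hypothesis gL : forall a b, cond_value L a b (g a b).

Definition negv a := g a zero.
Definition orv a b := g (negv a) b.
Definition andv a b := negv (orv (negv a) (negv b)).
Definition bigandv (A : {set V}) := foldr andv one (enum A).
Definition bigorv (s : seq V) := foldr orv zero s.

Lemma negv_in1 p : p \in L -> forall a, (negv a \in p.1) = (a \notin p.2).
Proof.
move=> pL a; have /andP [_ z1] := des_list_designated Ldes (des_list_pair pL).1.
by have [_ ->] := gL a zero pL; rewrite (negbTE z1) implybF.
Qed.

Lemma negv_in2 p : p \in L -> forall a, (negv a \in p.2) = (a \notin p.1).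
Proof.
move=> pL a; have /andP [_ z2] := des_list_designated Ldes (des_list_pair pL).2.
by have [-> _] := gL a zero pL; rewrite (negbTE z2) implybF.
Qed.

Lemma orv_in_des D a b : D \in des_list L -> (orv a b \in D) = (a \in D) || (b \in D).
Proof.
move=> /flatten_mapP [p pL]; have [or2 or1] := gL (negv a) b pL.
by rewrite !inE => /orP [] /eqP ->; rewrite ?or1 ?or2 (negv_in1, negv_in2) // implyNb.
Qed.

Lemma andv_in_des D a b : D \in des_list L -> (andv a b \in D) = (a \in D) && (b \in D).
Proof.
move=> /flatten_mapP [p pL]; have [p1L p2L] := des_list_pair pL.
rewrite !inE => /orP [] /eqP ->.
  by rewrite negv_in1 // orv_in_des // !negv_in2 // negb_or !negbK.
by rewrite negv_in2 // orv_in_des // !negv_in1 // negb_or !negbK.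
Qed.

Lemma bigandv_in_des A D : D \in des_list L -> (bigandv A \in D) = (A \subset D).
Proof.
move=> DL; rewrite -(eq_subset (mem_enum A)) subset_all /bigandv.
elim: (enum A) => [|x s IHs] /=; first by have /andP [] := des_list_designated Ldes DL.
by rewrite andv_in_des // IHs.
Qed.

Lemma bigorv_in_des s D : D \in des_list L -> (bigorv s \in D) = has [in D] s.
Proof.
move=> DL; elim: s => [|x s IHs] /=; first by have /andP [_ /negbTE] := des_list_designated Ldes DL.
by rewrite orv_in_des // IHs.
Qed.

Lemma DC1_of_values : DC1 L.
Proof.
move=> D DL; have [/hasP [D' D'L /andP [neq sub]]|none] :=
  boolP (has (fun D' => (D' != D) && (D \subset D')) (des_list L)).
  by right; exists D'.
left; exists (bigandv D); split=> [|D' D'L neq]; first by rewrite bigandv_in_des.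
by rewrite bigandv_in_des //; apply: contra none => sub; apply/hasP; exists D'; rewrite ?neq.
Qed.

Lemma DC2_of_values : DC2 L.
Proof.
move=> S _ _; exists (bigorv [seq bigandv A | A <- S]) => D DL.
rewrite bigorv_in_des // has_map.
split=> [/hasP [A AS]|[A AS sub]]; last by apply/hasP; exists A; rewrite //= bigandv_in_des.
by rewrite /= bigandv_in_des //; exists A.
Qed.

Lemma N1_pairs_of_values : antichain L -> N1_pairs L.
Proof.
move=> anti p q pL qL /orP [sub1|sub2].
  exact: anti p q pL qL sub1 (subset_dual (negv_in1 pL) (negv_in1 qL) sub1).
exact/esym/(anti q p qL pL (subset_dual (negv_in2 pL) (negv_in2 qL) sub2) sub2).
Qed.

Lemma N2_pairs_of_values : N2_pairs L.
Proof.
move=> p q pL qL; split.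
  exact: (subset_dual (negv_in1 pL) (negv_in2 qL)).
exact: (subset_dual (negv_in2 qL) (negv_in1 pL)).
Qed.

Lemma conditions_of_values : uniq L -> antichain L -> conditions L.
Proof.
move=> Lu anti; split; first exact: DC1_of_values; first exact: DC2_of_values.
  exact/(N1_pairsP Lu)/N1_pairs_of_values.
exact/N2_pairsP/N2_pairs_of_values.
Qed.

End ConditionsOfValues.

Section ValuesOfConditions.
Variables (one zero : V) (L : seq ({set V} * {set V})).
Hypothesis Ldes : all (fun p => designated one zero p.1 && designated one zero p.2) L.
Hypotheses (DC2L : DC2 L) (N1L : N1_pairs L) (N2L : N2_pairs L).
Variables a b : V.

Let target2 p := (a \in p.1) ==> (b \in p.2).
Let target1 p := (a \in p.2) ==> (b \in p.1).
Let targeted D := has (fun p => (D == p.1) && target1 p || (D == p.2) && target2 p) L.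

Lemma targeted_upward D q : targeted D -> q \in L ->
  (D \subset q.1 -> target1 q) /\ (D \subset q.2 -> target2 q).
Proof.
move=> /hasP [p pL /orP [] /andP [/eqP -> inp]] qL; split=> sub.
- by rewrite -(N1L pL qL) ?sub.
- have [/(_ sub) /subsetP q1p2 _] := N2L pL qL.
  apply/implyP => /q1p2 ap2; move/implyP: inp => /(_ ap2); exact: (subsetP sub).
- have [_ /(_ sub) /subsetP q2p1] := N2L qL pL.
  apply/implyP => /q2p1 ap1; move/implyP: inp => /(_ ap1); exact: (subsetP sub).
- by rewrite -(N1L pL qL) ?sub ?orbT.
Qed.

Lemma cond_value_exists : exists c, cond_value L a b c.
Proof.
pose S := [seq D <- des_list L | targeted D].
have [c Sc] : exists c, forall D, D \in des_list L ->
    (c \in D <-> exists2 D', D' \in S & D' \subset D).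
  have [S0|SN0] := eqVneq S [::]; last exact: DC2L SN0 (filter_subseq _ _).
  exists zero => D DL; rewrite S0; split=> [|[] //].
  by have /andP [_ /negbTE ->] := des_list_designated Ldes DL.
have targetedS D : D \in des_list L -> targeted D -> exists2 D', D' \in S & D' \subset D.
  by move=> DL wD; exists D; rewrite ?mem_filter ?wD.
exists c => q qL; have [q1L q2L] := des_list_pair qL.
split; apply/idP/idP.
- case/(Sc _ q2L) => D; rewrite mem_filter => /andP [wD _].
  exact: (targeted_upward wD qL).2.
- move=> inq; apply/(Sc _ q2L)/targetedS => //.
  by apply/hasP; exists q => //; rewrite eqxx /target2 inq orbT.
- case/(Sc _ q1L) => D; rewrite mem_filter => /andP [wD _].
  exact: (targeted_upward wD qL).1.
- move=> inq; apply/(Sc _ q1L)/targetedS => //.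
  by apply/hasP; exists q => //; rewrite eqxx /target1 inq.
Qed.

End ValuesOfConditions.

Lemma cond_value_fun one zero L :
    all (fun p => designated one zero p.1 && designated one zero p.2) L ->
    DC2 L -> N1_pairs L -> N2_pairs L ->
  exists f : V -> V -> V, forall a b, cond_value L a b (f a b).
Proof.
move=> Ldes DC2L N1L N2L.
have fa a : exists fa : V -> V, forall b, cond_value L a b (fa b).
  exact: fin_all_exists (cond_value_exists Ldes DC2L N1L N2L a).
exact: fin_all_exists fa.
Qed.

End DesignatedSets.

Section Entailment.
Variables (V : finType) (Con : Type) (interp : Con -> seq V -> V) (f : V -> V -> V).
Variable R : {set V} -> {set V} -> bool.
Implicit Types (G D : {set V}) (Gamma Delta : form Con -> Prop).

Lemma img_addf v Gamma A :
  img interp f v (addf Gamma A) = eval interp f v A |: img interp f v Gamma.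
Proof.
apply/setP => x; rewrite !inE orbC; apply/asboolP/orP => [[B [[GB|->] <-]]|].
- by left; apply/asboolP; exists B.
- by right.
case=> [/asboolP [B [GB <-]]|/eqP ->].
  by exists B; split=> //; left.
by exists A; split=> //; right.
Qed.

Lemma G_conditional_of_laws : cond_laws R f -> G_conditional interp f R.
Proof.
case=> lawR lawL Gamma Delta A B; split.
  by split=> ent v; move: (ent v); rewrite !img_addf /= lawR.
split=> [ent|[entA entB] v].
  by split=> v; move: (ent v); rewrite !img_addf /= lawL => /andP [].
by move: (entA v) (entB v); rewrite !img_addf /= lawL => -> ->.
Qed.

Definition consts_in G : form Con -> Prop :=
  fun A => exists2 x, x \in G & forall v, eval interp f v A = x.

Lemma img_consts_in v G : const_expressive interp -> img interp f v (consts_in G) = G.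
Proof.
move=> Hce; apply/setP => x; rewrite inE; apply/asboolP/idP => [[A [[y yG Ay] <-]]|xG].
  by rewrite Ay.
have [A [_ Ax]] := Hce x; exists A; split=> //; exists x => // v'; exact: Ax.
Qed.

Lemma entails_const_img (x0 : V) Gamma Delta G D :
    (forall v, img interp f v Gamma = G) -> (forall v, img interp f v Delta = D) ->
  entails interp f R Gamma Delta <-> R G D.
Proof. by move=> GammaG DeltaD; split=> [/(_ (fun=> x0))|RGD v]; rewrite GammaG DeltaD. Qed.

Lemma laws_of_G_conditional : const_expressive interp ->
  G_conditional interp f R -> cond_laws R f.
Proof.
move=> Hce Gcond.
have imgC X v : img interp f v (consts_in X) = X := img_consts_in v X Hce.
have img_const X A x : (forall v, eval interp f v A = x) ->
    forall v, img interp f v (addf (consts_in X) A) = x |: X.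
  by move=> Ax v; rewrite img_addf Ax imgC.
split=> G D a b; have [A [_ evA]] := Hce a; have [B [_ evB]] := Hce b;
  have evAB v : eval interp f v (Imp A B) = f a b by rewrite /= evA evB.
- have e1 := entails_const_img a (imgC G) (img_const D _ _ evAB).
  have e2 := entails_const_img a (img_const G _ _ (evA f)) (img_const D _ _ (evB f)).
  have [eqv _] := Gcond (consts_in G) (consts_in D) A B.
  by apply/idP/idP => [/e1/eqv/e2 | /e2/eqv/e1].
- have e1 := entails_const_img a (img_const G _ _ evAB) (imgC D).
  have e2 := entails_const_img a (imgC G) (img_const D _ _ (evA f)).
  have e3 := entails_const_img a (img_const G _ _ (evB f)) (imgC D).
  have [_ eqv] := Gcond (consts_in G) (consts_in D) A B.
  apply/idP/andP => [/e1/eqv [/e2 ? /e3 ?] // | [/e2 ? /e3 ?]].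
  by apply/e1/eqv.
Qed.

Lemma G_conditionalE : const_expressive interp ->
  G_conditional interp f R <-> cond_laws R f.
Proof.
by move=> Hce; split=> [|laws]; [apply: laws_of_G_conditional | apply: G_conditional_of_laws].
Qed.

End Entailment.

Theorem theorem7p9 (V : finType) (one zero : V) (Hneq : one != zero)
    (Con : Type) (interp : Con -> seq V -> V) (Hce : const_expressive interp)
    (R : {set V} -> {set V} -> bool) (HR : intersective one zero R) :
  admits_G_conditional interp R <->
  (forall L, minimal_representation one zero R L -> conditions L).
Proof.
split=> [[f /(G_conditionalE _ _ Hce) laws] L minL | conds].
  have [repL _] := minL; have [_ Ldes _] := repL.
  have antiL := minimal_representation_antichain minL.
  have Lu := minimal_representation_uniq minL.
  exact: conditions_of_values Ldes (cond_values_of_laws repL antiL laws) Lu antiL.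
have [L minL] := minimal_representation_exists HR.
have [repL _] := minL; have [_ Ldes _] := repL.
have Lu := minimal_representation_uniq minL.
have [_ DC2L /(N1_pairsP Lu) N1L /N2_pairsP N2L] := conds L minL.
have [f fL] := cond_value_fun Ldes DC2L N1L N2L.
by exists f; apply/(G_conditionalE _ _ Hce)/(cond_laws_of_values repL fL).
Qed.
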